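(* Let $G$ be a compact Hausdorff topological group, $p\colon E\to B$ a $G$-map of Hausdorff $G$-spaces, and suppose $E$ is $G$-contractible. If either ($B$ is $G$-connected and $E^G\neq\emptyset$) or ($p(E^H)=B^H$ for all closed subgroups $H$ of $G$), then $\mathrm{secat}_G(p)=\mathrm{cat}_G(B)$.
   Context: $X^H=\{x: hx=x\ \forall h\in H\}$; $X$ is $G$-connected if $X^H$ is path-connected for every closed subgroup $H$. A $G$-homotopy is an equivariant homotopy with trivial action on $I$. An invariant set is $G$-categorical if its inclusion is $G$-homotopic to a map into a single orbit; $\mathrm{cat}_G(X)$ is the least number of open $G$-categorical sets covering $X$; $X$ is $G$-contractible if $\mathrm{cat}_G(X)=1$. $\mathrm{secat}_G(p)$ is the least $k$ such that $B$ is covered by $k$ invariant open sets $U_i$ each admitting a $G$-map $s\colon U_i\to E$ with $ps$ $G$-homotopic to the inclusion ($\infty$ if none). *)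

From HB Require Import structures.
From mathcomp Require Import all_boot all_order all_algebra.
From mathcomp Require Import all_classical all_reals.
From mathcomp Require Import topology Rstruct Rstruct_topology.
From Stdlib Require Import Rdefinitions.
Unset Strict Implicit. Unset Printing Implicit Defensive.
Import Order.TTheory GRing.Theory Num.Theory.
Local Open Scope classical_set_scope.

Definition unitI : set R := `[0%R, 1%R].

Record TopGroup := {
  tg_car :> topologicalType;
  tg_mul : tg_car -> tg_car -> tg_car;
  tg_inv : tg_car -> tg_car;
  tg_one : tg_car;
  tg_mulA : forall x y z, tg_mul x (tg_mul y z) = tg_mul (tg_mul x y) z;
  tg_mul1g : forall x, tg_mul tg_one x = x;
  tg_mulg1 : forall x, tg_mul x tg_one = x;
  tg_mulVg : forall x, tg_mul (tg_inv x) x = tg_one;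
  tg_mulgV : forall x, tg_mul x (tg_inv x) = tg_one;
  tg_mul_cont : continuous (fun p : tg_car * tg_car => tg_mul p.1 p.2);
  tg_inv_cont : continuous tg_inv }.

Arguments tg_mul {t} _ _.
Arguments tg_inv {t} _.

Definition closed_subgroup {G : TopGroup} (H : set G) : Prop :=
  [/\ closed H, H (tg_one G),
      (forall x y, H x -> H y -> H (tg_mul x y)) &
      (forall x, H x -> H (tg_inv x))].

Record GSpace (G : TopGroup) := {
  gs_car :> topologicalType;
  gs_act : G -> gs_car -> gs_car;
  gs_act_cont : continuous (fun p : G * gs_car => gs_act p.1 p.2);
  gs_act1 : forall x, gs_act (tg_one G) x = x;
  gs_actM : forall g h x, gs_act (tg_mul g h) x = gs_act g (gs_act h x) }.

Arguments gs_act {G} g0 _ _.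

Section GTop.
Context {G : TopGroup}.

Definition Gfixset (X : GSpace G) (H : set G) : set X :=
  [set x | forall h, H h -> gs_act X h x = x].

Definition orbit {X : GSpace G} (y : X) : set X :=
  [set gs_act X g y | g in [set: G]].

Definition invariant {X : GSpace G} (U : set X) : Prop :=
  forall g x, U x -> U (gs_act X g x).

Definition Gmap {X Y : GSpace G} (f : X -> Y) : Prop :=
  continuous f /\ forall g x, f (gs_act X g x) = gs_act Y g (f x).

(* A G-map defined on the invariant subset U of X (values off U irrelevant). *)
Definition Gmap_on {X Y : GSpace G} (U : set X) (f : X -> Y) : Prop :=
  {within U, continuous f} /\
  forall g x, U x -> f (gs_act X g x) = gs_act Y g (f x).

Definition path_connected {T : topologicalType} (A : set T) : Prop :=
  forall x y, A x -> A y ->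
    exists f : R -> T, [/\ {within unitI, continuous f},
      f 0%R = x, f 1%R = y & forall t, unitI t -> A (f t)].

Definition G_connected (X : GSpace G) : Prop :=
  forall H : set G, closed_subgroup H -> path_connected (Gfixset X H).

Definition Ghomotopic_on {X Y : GSpace G} (U : set X) (f0 f1 : X -> Y) : Prop :=
  exists F : X -> R -> Y,
    [/\ {within U `*` unitI, continuous (fun p : X * R => F p.1 p.2)},
        (forall x, U x -> F x 0%R = f0 x),
        (forall x, U x -> F x 1%R = f1 x) &
        (forall g x t, U x -> unitI t -> F (gs_act X g x) t = gs_act Y g (F x t))].

Definition G_categorical {X : GSpace G} (U : set X) : Prop :=
  invariant U /\
  exists (f : X -> X) (y0 : X),
    (forall x, U x -> orbit y0 (f x)) /\ Ghomotopic_on U id f.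

(* least natural number satisfying P, or None (= infinity) if there is none *)
Lemma exists_asbool_nat (P : nat -> Prop) : (exists n, P n) -> exists n, asbool (P n).
Proof. by case=> n Pn; exists n; apply/asboolP. Qed.

Definition least_nat (P : nat -> Prop) : option nat :=
  match pselect (exists n, P n) with
  | left h => Some (ex_minn (@exists_asbool_nat P h))
  | right _ => None
  end.

Definition cat_cover (X : GSpace G) (k : nat) : Prop :=
  exists U : 'I_k -> set X,
    (forall i, open (U i) /\ G_categorical (U i)) /\
    forall x, exists i, U i x.

Definition catG (X : GSpace G) : option nat := least_nat (cat_cover X).

Definition G_contractible (X : GSpace G) : Prop := catG X = Some 1%N.

Definition secat_cover {E B : GSpace G} (p : E -> B) (k : nat) : Prop :=
  exists U : 'I_k -> set B,
    (forall i, [/\ open (U i), invariant (U i) &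
       exists s : B -> E, Gmap_on (U i) s /\ Ghomotopic_on (U i) (p \o s) id]) /\
    forall b, exists i, U i b.

Definition secatG {E B : GSpace G} (p : E -> B) : option nat :=
  least_nat (secat_cover p).

End GTop.

(* If [s] is a G-section of [p] up to G-homotopy over [U], composing it with a
   G-deformation of [E] into an orbit [G e] deforms [U] into the orbit [G (p e)],
   so [U] is G-categorical: cat_G(B) <= secat_G(p).  Conversely a G-categorical
   [U] deforms into some orbit [G y], so it suffices to have a G-section up to
   G-homotopy over [G y].  As [G] is compact and [B] Hausdorff, [G -> G y] is a
   quotient map, so G-maps and G-homotopies out of [G y] are given by data fixed
   by the stabiliser [G_y]: a lift [e] of [y] in [E^(G_y)] yields the section
   [g y |-> g e], while a [G]-fixed [e] and a path [gam] in [B^(G_y)] from [p e] to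
   [y] yield the constant section [e] and the G-homotopy [(g y, t) |-> g (gam t)]. *)

From Pilot Require Import Defs.
From mathcomp Require Import all_boot all_classical topology.
From mathcomp Require Import ssralg interval normedtype Rstruct Rstruct_topology.
From Stdlib Require Import Rbase Lra.
Import Defs.
Local Open Scope classical_set_scope.

Lemma within_continuousP {T U : topologicalType} (A : set T) (f : T -> U) :
  {within A, continuous f} <-> forall x, A x -> forall V, nbhs (f x) V ->
     \forall y \near x, A y -> V (f y).
Proof. by rewrite subspace_continuousP. Qed.

Lemma within_continuous_comp {T U S : topologicalType} (A : set T) (B : set U)
    (f : T -> U) (g : U -> S) :
  {within B, continuous g} -> {homo f : x / A x >-> B x} ->
  {within A, continuous f} -> {within A, continuous (g \o f)}.
Proof.
move=> /within_continuousP cg fAB /within_continuousP cf.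
apply/within_continuousP => x Ax V gV.
apply: filterS (cf x Ax _ (cg (f x) (fAB x Ax) V gV)) => y gfV Ay.
exact: gfV _ (fAB y Ay).
Qed.

Lemma within_continuous_pair {T U S : topologicalType} (A : set T)
    (f : T -> U) (g : T -> S) :
  {within A, continuous f} -> {within A, continuous g} ->
  {within A, continuous (fun x => (f x, g x))}.
Proof.
rewrite !subspace_continuousP => cf cg x Ax.
by apply: cvg_pair; [exact: cf|exact: cg].
Qed.

(* Unlike [withinU_continuous], the ambient set [W] need not be closed. *)
Lemma within_continuous_setIU {T U : topologicalType} (W A B : set T) (f : T -> U) :
  closed A -> closed B ->
  {within W `&` A, continuous f} -> {within W `&` B, continuous f} ->
  {within W `&` (A `|` B), continuous f}.
Proof.
have piece (C : set T) x V : closed C -> {within W `&` C, continuous f} ->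
    W x -> nbhs (f x) V -> \forall y \near x, W y -> C y -> V (f y).
  move=> cC /within_continuousP fC Wx fV; have [Cx|nCx] := pselect (C x).
    by apply: filterS (fC x (conj Wx Cx) V fV) => y VC Wy Cy; exact: VC.
  have : nbhs x (~` C) by apply: open_nbhs_nbhs; split => //; exact: closed_openC.
  by apply: filterS => y nCy _ /nCy.
move=> cA cB fA fB; apply/within_continuousP => x [Wx _] V fV.
have := piece A x V cA fA Wx fV; have := piece B x V cB fB Wx fV.
apply: filter_app2; apply: nearW => y VB VA [Wy [Ay|By]]; [exact: VA|exact: VB].
Qed.

Lemma fst_continuous {T U : topologicalType} : continuous (@fst T U).
Proof. by case=> x y; exact: cvg_fst. Qed.

Lemma snd_continuous {T U : topologicalType} : continuous (@snd T U).
Proof. by case=> x y; exact: cvg_snd. Qed.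

Lemma closed_preimage_snd {T U : topologicalType} (C : set U) :
  closed C -> closed (@snd T U @^-1` C).
Proof. exact: (proj1 (continuous_closedP _) snd_continuous). Qed.

Lemma prod_hausdorff {T U : topologicalType} :
  hausdorff_space T -> hausdorff_space U -> hausdorff_space (T * U)%type.
Proof.
move=> hT hU [p1 p2] [q1 q2] cl; congr pair.
- apply: hT => A B nA nB.
  have [[a b] [/= Aa Ba]] := cl (fst @^-1` A) (fst @^-1` B)
    (fst_continuous (p1, p2) A nA) (fst_continuous (q1, q2) B nB).
  by exists a.
- apply: hU => A B nA nB.
  have [[a b] [/= Aa Ba]] := cl (snd @^-1` A) (snd @^-1` B)
    (snd_continuous (p1, p2) A nA) (snd_continuous (q1, q2) B nB).
  by exists b.
Qed.

(* [f] maps closed subsets of the compact set [A] to closed sets, which makes the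
   map induced by [h] on [f @` A] continuous. *)
Lemma compact_factor_continuous {X Y Z : topologicalType} {A : set X}
    {f : X -> Y} {h : X -> Z} (z0 : Z) :
  compact A -> closed A -> hausdorff_space Y -> continuous f ->
  {within A, continuous h} ->
  (forall x x', A x -> A x' -> f x = f x' -> h x = h x') ->
  exists phi : Y -> Z,
    (forall x, A x -> phi (f x) = h x) /\ {within f @` A, continuous phi}.
Proof.
move=> cA clA hY cf ch hf.
pose phi y := if pselect (exists x, A x /\ f x = y) is left e
  then h (proj1_sig (cid e)) else z0.
have phiE x : A x -> phi (f x) = h x.
  move=> Ax; rewrite /phi; case: pselect => [e|[]]; last by exists x.
  by case: cid => x' [Ax' e'] /=; exact: hf.
exists phi; split => //; apply/within_continuousP => _ [x Ax <-] V.
rewrite phiE // => nV.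
have [V' clV' eV'] : exists2 V', closed V' & V' `&` A = h @^-1` (~` V°) `&` A.
  apply/closed_subspaceP.
  apply: (proj1 (continuous_closedP _) ch).
  by apply: open_closedC; exact: open_interior.
have cpD : closed (f @` (V' `&` A)).
  apply: compact_closed => //; apply: continuous_compact.
    exact: continuous_subspaceT.
  by apply: subclosed_compact cA _; [exact: closedI|move=> ? []].
have : nbhs (f x) (~` (f @` (V' `&` A))).
  apply: open_nbhs_nbhs; split; first exact: closed_openC.
  move=> [x'' D'' e]; have := D''; rewrite eV' => -[/= nO Ax''].
  by apply: nO; rewrite -(hf x x'').
apply: filterS => y nDy [x' Ax' ey]; rewrite -ey phiE //.
apply: interior_subset; apply: contrapT => nO; apply: nDy.
by rewrite -ey; exists x' => //; rewrite eV'.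
Qed.

Lemma unitIE (t : R) : unitI t <-> (0 <= t <= 1)%R.
Proof.
rewrite /unitI /= in_itv /=; split; first by case/andP => /RleP ? /RleP.
by case=> ? ?; apply/andP; split; apply/RleP.
Qed.

Lemma unitI_compact : compact unitI.
Proof. exact: segment_compact. Qed.

Lemma unitI_closed : closed unitI.
Proof. exact: compact_closed (@Rhausdorff _) unitI_compact. Qed.

Lemma closed_Rle_half : closed [set t : R | (t <= 1/2)%R].
Proof.
have := @closed_le _ (1/2 : R); congr closed.
by apply/funext => t; apply/propext; split => /RleP.
Qed.

Lemma closed_Rge_half : closed [set t : R | (1/2 <= t)%R].
Proof.
have := @closed_ge _ (1/2 : R); congr closed.
by apply/funext => t; apply/propext; split => /RleP.
Qed.

Lemma affine_continuous (a b : R) : continuous (fun t : R => a * t + b)%R.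
Proof.
by move=> t; apply: (@cvgD _ R^o); [exact: mulrl_continuous|exact: cvg_cst].
Qed.

Lemma reparam_continuous {X Y : topologicalType} (U : set X) (W : set (X * R))
    (F : X -> R -> Y) (a b : R) :
  {within U `*` unitI, continuous (fun q : X * R => F q.1 q.2)} ->
  (forall q, W q -> U q.1 /\ unitI (a * q.2 + b)%R) ->
  {within W, continuous (fun q : X * R => F q.1 (a * q.2 + b)%R)}.
Proof.
move=> cF WU; apply: (@within_continuous_comp _ _ _ W (U `*` unitI)
  (fun q : X * R => (q.1, a * q.2 + b)%R) (fun q => F q.1 q.2) cF) => //.
apply: within_continuous_pair; apply: continuous_subspaceT.
  exact: fst_continuous.
by move=> q; exact: continuous_comp (snd_continuous q) (affine_continuous a b _).
Qed.

Lemma least_nat_some (P : nat -> Prop) n : least_nat P = Some n -> P n.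
Proof.
rewrite /least_nat; case: pselect => // h [<-].
by case: ex_minnP => m /asboolP.
Qed.

Section Ghomotopy.
Context {G : TopGroup} {X Y Z : GSpace G}.
Implicit Types (U : set X).

Lemma Ghomotopic_on_sym {U} {f0 f1 : X -> Y} :
  Ghomotopic_on U f0 f1 -> Ghomotopic_on U f1 f0.
Proof.
move=> [F [cF F0 F1 eF]]; exists (fun x t => F x (-1 * t + 1)%R); split.
- apply: reparam_continuous cF _ => -[x t] [/= Ux /unitIE It].
  by split => //; apply/unitIE; lra.
- by move=> x Ux; rewrite (_ : (-1 * 0 + 1 = 1)%R) ?F1 //; lra.
- by move=> x Ux; rewrite (_ : (-1 * 1 + 1 = 0)%R) ?F0 //; lra.
- by move=> g x t Ux /unitIE It; apply: eF => //; apply/unitIE; lra.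
Qed.

Lemma Ghomotopic_on_trans {U} {f0 f1 f2 : X -> Y} :
  Ghomotopic_on U f0 f1 -> Ghomotopic_on U f1 f2 -> Ghomotopic_on U f0 f2.
Proof.
move=> [F [cF F0 F1 eF]] [F' [cF' F0' F1' eF']].
pose L x t := if Rle_dec t (1/2) then F x (2 * t + 0)%R else F' x (2 * t + -1)%R.
exists L; split.
- have -> : U `*` unitI = (U `*` unitI) `&`
      (snd @^-1` [set t | (t <= 1/2)%R] `|` snd @^-1` [set t | (1/2 <= t)%R]).
    apply/funext => -[x t]; apply/propext; split => [h|[]//]; split => //=.
    by case: (Rle_dec t (1/2)) => h'; [left|right; lra].
  apply: within_continuous_setIU.
  + exact: closed_preimage_snd closed_Rle_half.
  + exact: closed_preimage_snd closed_Rge_half.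
  + apply: (@subspace_eq_continuous _ _ _ (fun q => F q.1 (2 * q.2 + 0)%R)).
      by move=> [x t] /set_mem [_ /= h]; rewrite /from_subspace /L /=; case: Rle_dec.
    apply: reparam_continuous cF _ => -[x t] [[/= Ux /unitIE It] /= h].
    by split => //; apply/unitIE; lra.
  + apply: (@subspace_eq_continuous _ _ _ (fun q => F' q.1 (2 * q.2 + -1)%R)).
      move=> [x t] /set_mem [[/= Ux _] /= h]; rewrite /from_subspace /L /=.
      case: Rle_dec => //= h'.
      have -> : t = (1/2)%R by lra.
      have -> : (2 * (1/2) + 0 = 1)%R by lra.
      have -> : (2 * (1/2) + -1 = 0)%R by lra.
      by rewrite F1 // F0'.
    apply: reparam_continuous cF' _ => -[x t] [[/= Ux /unitIE It] /= h].
    by split => //; apply/unitIE; lra.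
- move=> x Ux; rewrite /L; case: Rle_dec => h; last by lra.
  by rewrite (_ : (2 * 0 + 0 = 0)%R) ?F0 //; lra.
- move=> x Ux; rewrite /L; case: Rle_dec => h; first by lra.
  by rewrite (_ : (2 * 1 + -1 = 1)%R) ?F1' //; lra.
- move=> g x t Ux /unitIE It; rewrite /L; case: Rle_dec => h.
    by apply: eF => //; apply/unitIE; lra.
  by apply: eF' => //; apply/unitIE; lra.
Qed.

Lemma Gmap_on_id U : Gmap_on U (@id X).
Proof. by split=> //; apply: continuous_subspaceT => x; exact: cvg_id. Qed.

Lemma eq_Ghomotopic_on {U} {f0 f1 : X -> Y} :
  (forall x, U x -> f0 x = f1 x) -> Gmap_on U f1 -> Ghomotopic_on U f0 f1.
Proof.
move=> e [cf ef]; exists (fun x _ => f1 x); split.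
- apply: (@within_continuous_comp _ _ _ _ U fst f1 cf); first by move=> q [].
  exact: continuous_subspaceT fst_continuous.
- by move=> x Ux; rewrite e.
- by [].
- by move=> g x t Ux _; exact: ef.
Qed.

Lemma Ghomotopic_on_Gmap_on {U} {f0 f1 : X -> Y} :
  invariant U -> Ghomotopic_on U f0 f1 -> Gmap_on U f1.
Proof.
move=> iU [F [cF _ F1 eF]]; have I1 : unitI 1%R by apply/unitIE; lra.
split; last by move=> g x Ux; rewrite -!F1 ?eF //; exact: iU.
apply: (@subspace_eq_continuous _ _ _ (fun x => F x 1%R)).
  by move=> x /set_mem Ux; rewrite /from_subspace /= F1.
apply: (@within_continuous_comp _ _ _ U (U `*` unitI)
  (fun x => (x, 1%R)) (fun q => F q.1 q.2) cF) => //.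
by apply: within_continuous_pair; apply: continuous_subspaceT => x;
  [exact: cvg_id|exact: cvg_cst].
Qed.

Lemma Gmap_on_comp {U} {V : set Y} {s : X -> Y} {h : Y -> Z} :
  {homo s : x / U x >-> V x} -> Gmap_on U s -> Gmap_on V h -> Gmap_on U (h \o s).
Proof.
move=> sUV [cs es] [ch eh]; split; first exact: within_continuous_comp ch sUV cs.
by move=> g x Ux /=; rewrite es // eh //; exact: sUV.
Qed.

Lemma Ghomotopic_on_comp_l {U} {f0 f1 : X -> Y} {q : Y -> Z} :
  Gmap q -> Ghomotopic_on U f0 f1 -> Ghomotopic_on U (q \o f0) (q \o f1).
Proof.
move=> [cq qE] [F [cF F0 F1 eF]]; exists (fun x t => q (F x t)); split.
- exact: (@within_continuous_comp _ _ _ _ setT (fun p : X * R => F p.1 p.2) q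
    (continuous_subspaceT cq) (fun _ _ => I) cF).
- by move=> x Ux /=; rewrite F0.
- by move=> x Ux /=; rewrite F1.
- by move=> g x t Ux It; rewrite eF // qE.
Qed.

Lemma Ghomotopic_on_comp_r {U} {V : set Y} {s : X -> Y} {h0 h1 : Y -> Z} :
  {homo s : x / U x >-> V x} -> Gmap_on U s ->
  Ghomotopic_on V h0 h1 -> Ghomotopic_on U (h0 \o s) (h1 \o s).
Proof.
move=> sUV [cs es] [F [cF F0 F1 eF]]; exists (fun x t => F (s x) t); split.
- apply: (@within_continuous_comp _ _ _ _ (V `*` unitI)
    (fun q : X * R => (s q.1, q.2)) (fun q => F q.1 q.2) cF).
    by move=> [x t] [/= Ux It]; split => //; exact: sUV.
  apply: within_continuous_pair; last exact: continuous_subspaceT snd_continuous.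
  apply: (@within_continuous_comp _ _ _ _ U fst s cs); first by move=> q [].
  exact: continuous_subspaceT fst_continuous.
- by move=> x Ux /=; rewrite F0 //; exact: sUV.
- by move=> x Ux /=; rewrite F1 //; exact: sUV.
- by move=> g x t Ux It /=; rewrite es // eF //; exact: sUV.
Qed.

End Ghomotopy.

Section Orbits.
Context {G : TopGroup}.

Definition stabilizer (X : GSpace G) (y : X) : set G := [set g | gs_act X g y = y].

Lemma gs_actVK (X : GSpace G) (g : G) (x : X) :
  gs_act X (tg_inv g) (gs_act X g x) = x.
Proof. by rewrite -gs_actM tg_mulVg gs_act1. Qed.

Lemma act_orbit_continuous (X : GSpace G) (y : X) :
  continuous (fun g : G => gs_act X g y).
Proof.
apply/continuous_subspace_setT.
apply: (@within_continuous_comp _ _ _ setT setT (fun g : G => (g, y))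
  (fun q : G * X => gs_act X q.1 q.2)
  (continuous_subspaceT (gs_act_cont _ X))) => //.
by apply: within_continuous_pair; apply: continuous_subspaceT => g;
  [exact: cvg_id|exact: cvg_cst].
Qed.

Lemma stabilizer_closed_subgroup {X : GSpace G} (y : X) :
  hausdorff_space X -> closed_subgroup (stabilizer X y).
Proof.
move=> hX; split.
- apply: (proj1 (continuous_closedP _) (act_orbit_continuous X y) [set y]).
  exact/accessible_closed_set1/hausdorff_accessible.
- exact: gs_act1.
- by move=> a b ha hb; rewrite /stabilizer /= gs_actM hb ha.
- by move=> a ha; rewrite /stabilizer /= -{1}ha gs_actVK.
Qed.

Lemma stabilizer_act_eq {X Y : GSpace G} {y : X} {z : Y} {g g' : G} :
  Gfixset Y (stabilizer X y) z ->
  gs_act X g y = gs_act X g' y -> gs_act Y g z = gs_act Y g' z.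
Proof.
move=> Fz e; have /Fz : stabilizer X y (tg_mul (tg_inv g') g).
  by rewrite /stabilizer /= gs_actM e gs_actVK.
by rewrite gs_actM => /(congr1 (gs_act Y g')); rewrite -gs_actM tg_mulgV gs_act1.
Qed.

Lemma orbit_Gmap_on {X Y : GSpace G} {y : X} {z : Y} :
  compact [set: G] -> hausdorff_space X -> Gfixset Y (stabilizer X y) z ->
  exists2 s : X -> Y, Gmap_on (orbit y) s &
    forall g, s (gs_act X g y) = gs_act Y g z.
Proof.
move=> cG hX Fz.
have [s [sE cs]] := compact_factor_continuous z cG closedT hX
  (act_orbit_continuous X y) (continuous_subspaceT (act_orbit_continuous Y z))
  (fun g g' _ _ => stabilizer_act_eq Fz).
exists s => [|g]; last exact: sE.
by split => // g _ [h _ <-]; rewrite -gs_actM !sE // gs_actM.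
Qed.

Lemma Ghomotopic_on_orbit_path {X : GSpace G} {y z : X} {gam : R -> X} :
  compact [set: G] -> hausdorff_space X -> (forall g, gs_act X g z = z) ->
  {within unitI, continuous gam} -> gam 0%R = z -> gam 1%R = y ->
  (forall t, unitI t -> Gfixset X (stabilizer X y) (gam t)) ->
  Ghomotopic_on (orbit y) (fun=> z) id.
Proof.
move=> cG hX Fz cgam gam0 gam1 Fgam.
pose A := [set: G] `*` unitI.
have cA : compact A by apply: compact_setX => //; exact: unitI_compact.
have clA : closed A by rewrite /A setTX; exact: closed_preimage_snd unitI_closed.
pose orb (q : G * R) := (gs_act X q.1 y, q.2).
have corb : continuous orb.
  apply/continuous_subspace_setT; apply: within_continuous_pair;
    apply: continuous_subspaceT; last exact: snd_continuous.
  move=> q.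
  exact: continuous_comp (fst_continuous q) (act_orbit_continuous X y _).
have ch : {within A, continuous (fun q : G * R => gs_act X q.1 (gam q.2))}.
  apply: (@within_continuous_comp _ _ _ A setT (fun q : G * R => (q.1, gam q.2))
    (fun q : G * X => gs_act X q.1 q.2)
    (continuous_subspaceT (gs_act_cont _ X))) => //.
  apply: within_continuous_pair; first exact: continuous_subspaceT fst_continuous.
  apply: (@within_continuous_comp _ _ _ A unitI snd gam cgam); first by move=> q [].
  exact: continuous_subspaceT snd_continuous.
have wd q q' : A q -> A q' -> orb q = orb q' ->
    gs_act X q.1 (gam q.2) = gs_act X q'.1 (gam q'.2).
  case: q q' => [g t] [g' t'] _ [_ /= It'] [/= e ->].
  exact: stabilizer_act_eq (Fgam t' It') e.
have [phi [phiE cphi]] := compact_factor_continuous y cA clA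
  (prod_hausdorff hX (@Rhausdorff _)) corb ch wd.
have [I0 I1] : unitI 0%R /\ unitI 1%R by split; apply/unitIE; lra.
exists (fun x t => phi (x, t)); split.
- apply: (@subspace_eq_continuous _ _ _ phi); first by case.
  apply: continuous_subspaceW cphi => -[_ t] [/= [g _ <-] It].
  by exists (g, t).
- by move=> _ [g _ <-]; rewrite (phiE (g, 0%R)) //= gam0 Fz.
- by move=> _ [g _ <-]; rewrite (phiE (g, 1%R)) //= gam1.
- move=> h _ t [g _ <-] It.
  by rewrite -gs_actM (phiE (tg_mul h g, t)) // (phiE (g, t)) //= gs_actM.
Qed.

End Orbits.

Section SectionalCategory.
Context {G : TopGroup} {E B : GSpace G} (p : E -> B).

Definition orbit_Gsection (y : B) : Prop :=
  exists s : B -> E, Gmap_on (orbit y) s /\ Ghomotopic_on (orbit y) (p \o s) id.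

Lemma orbit_Gsection_lift {y : B} {e : E} :
  compact [set: G] -> hausdorff_space B -> Gmap p ->
  Gfixset E (stabilizer B y) e -> p e = y -> orbit_Gsection y.
Proof.
move=> cG hB [_ ep] Fe pe; have [s sG sE] := orbit_Gmap_on cG hB Fe.
exists s; split => //; apply: eq_Ghomotopic_on (Gmap_on_id _).
by move=> _ [g _ <-]; rewrite /= sE ep pe.
Qed.

Lemma orbit_Gsection_fixed_point {y : B} {e : E} :
  compact [set: G] -> hausdorff_space B -> Gmap p ->
  (forall g, gs_act E g e = e) -> path_connected (Gfixset B (stabilizer B y)) ->
  orbit_Gsection y.
Proof.
move=> cG hB [_ ep] Fe pcB.
have Fpe g : gs_act B g (p e) = p e by rewrite -ep Fe.
have [gam [cgam gam0 gam1 Fgam]] := pcB (p e) y (fun h _ => Fpe h) (fun h sh => sh).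
exists (fun=> e); split.
  by split=> [|g x _]; [apply: continuous_subspaceT => x; exact: cvg_cst|rewrite Fe].
exact: Ghomotopic_on_orbit_path cG hB Fpe cgam gam0 gam1 Fgam.
Qed.

Lemma G_categorical_Gsection {U : set B} :
  (forall y, orbit_Gsection y) -> G_categorical U ->
  exists s : B -> E, Gmap_on U s /\ Ghomotopic_on U (p \o s) id.
Proof.
move=> sec [iU [f [y [fU hf]]]]; have [s [sG hs]] := sec y.
have fG := Ghomotopic_on_Gmap_on iU hf.
exists (s \o f); split; first exact: Gmap_on_comp fU fG sG.
apply: Ghomotopic_on_trans (Ghomotopic_on_sym hf).
exact: Ghomotopic_on_comp_r fU fG hs.
Qed.

Lemma cat_cover_secat_cover (k : nat) :
  (forall y, orbit_Gsection y) -> cat_cover B k -> secat_cover p k.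
Proof.
move=> sec [U [hU covU]]; exists U; split => // i.
have [oU catU] := hU i.
by split => //; [case: catU | exact: G_categorical_Gsection sec catU].
Qed.

Lemma G_contractible_deformation :
  G_contractible E ->
  exists (f : E -> E) (e : E), (forall x, orbit e (f x)) /\ Ghomotopic_on setT id f.
Proof.
move=> /least_nat_some [U [hU covU]].
have UT : U ord0 = setT.
  by apply/seteqP; split => // x _; have [i] := covU x; rewrite (ord1 i).
have [_ [_ [f [e [fU hf]]]]] := hU ord0; rewrite UT in fU hf.
by exists f, e; split => // x; exact: fU.
Qed.

Lemma secat_cover_cat_cover (k : nat) :
  Gmap p -> G_contractible E -> secat_cover p k -> cat_cover B k.
Proof.
move=> pG /G_contractible_deformation [f [e [fE hf]]] [U [hU covU]].
exists U; split => // i; have [oU iU [s [sG hs]]] := hU i.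
split=> //; split=> //; exists (p \o f \o s), (p e); split.
  move=> x _; have [g _ gfsx] := fE (s x).
  by exists g => //; rewrite /= -gfsx; case: pG => _ ->.
apply: Ghomotopic_on_trans (Ghomotopic_on_sym hs) _.
apply: Ghomotopic_on_comp_l pG _.
exact: Ghomotopic_on_comp_r (fun _ _ => I) sG hf.
Qed.

End SectionalCategory.

Theorem corollary4p7 (G : TopGroup) (E B : GSpace G) (p : E -> B) :
  compact [set: G] -> hausdorff_space G ->
  hausdorff_space E -> hausdorff_space B ->
  Gmap p ->
  G_contractible E ->
  ((G_connected B /\ Gfixset E [set: G] !=set0) \/
   (forall H : set G, closed_subgroup H -> p @` Gfixset E H = Gfixset B H)) ->
  secatG p = catG B.
Proof.
move=> cG _ _ hB pG cE hyp.
have sec y : orbit_Gsection p y.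
  have Sy := stabilizer_closed_subgroup y hB.
  case: hyp => [[GcB [e Fe]]|surj].
    exact: orbit_Gsection_fixed_point cG hB pG (fun g => Fe g I) (GcB _ Sy).
  have : Gfixset B (stabilizer B y) y by [].
  rewrite -(surj _ Sy) => -[e Fe pe].
  exact: orbit_Gsection_lift cG hB pG Fe pe.
rewrite /secatG /catG; congr least_nat; apply/funext => k; apply/propext; split.
- exact: secat_cover_cat_cover.
- exact: cat_cover_secat_cover.
Qed.
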